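(* Let $\boldsymbol\mu>\mathbf 0$, assume every matrix in $\mathcal Z(\boldsymbol\mu)$ is irreducible, and assume $\mathcal Z(\boldsymbol\mu)$ is a primitive set. For the iteration started from an arbitrary $\mathbf p^{(0)}>\mathbf 0$ — namely $y_i^{(k)}=\max_{k_i\in\mathcal K_i}\big(\mathbf e_i^T-\mathbf a_i^{k_i}(\boldsymbol\mu)\big)\mathbf p^{(k)}$, $\beta^{(k)}=\min_i p_i^{(k)}/y_i^{(k)}$, $\mathbf p^{(k+1)}=\mathbf y^{(k)}/\|\mathbf y^{(k)}\|$ — the sequence $\beta^{(k)}$ converges to $\beta^*=1/\max_{\mathbf Z\in\mathcal Z(\boldsymbol\mu)}\lambda(\mathbf Z)$, and $\mathbf p^{(k)}$ converges to a vector $\mathbf p^*$ such that $\lim_{\alpha\to\infty}\Gamma(\alpha\mathbf p^* )=\beta^*\boldsymbol\mu$.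
   Context: Multicast system: $N$ transmitters $T_1,\dots,T_N$; transmitter $T_i$ has $K_i\geq1$ receivers $R_i^{k}$, $k\in\mathcal K_i=\{1,\dots,K_i\}$. Channel gains $g_{r_i^{k},t_j}\geq 0$ (from $T_j$ to $R_i^k$) with $g_{r_i^{k},t_i}>0$; noise variance $\sigma^2>0$. SINR: $\gamma_i^{k}(\mathbf p)=\frac{g_{r_i^{k},t_i}p_i}{\sum_{j\neq i}g_{r_i^{k},t_j}p_j+\sigma^2}$, $\gamma_i(\mathbf p)=\min_{k\in\mathcal K_i}\gamma_i^k(\mathbf p)$, $\Gamma(\mathbf p)=(\gamma_1(\mathbf p),\dots,\gamma_N(\mathbf p))$. For $\boldsymbol\mu\in\mathbb R^N$, $\mathbf a_i^{k}(\boldsymbol\mu)\in\mathbb R^{1\times N}$ is the row vector with $i$-th entry $1$ and $j$-th entry $-\mu_i g_{r_i^{k},t_j}/g_{r_i^{k},t_i}$ for $j\neq i$. $\mathcal G(\boldsymbol\mu)$ is the set of $N\times N$ matrices whose $i$-th row is $\mathbf a_i^{k_i}(\boldsymbol\mu)$ for some $k_i\in\mathcal K_i$; $\mathcal Z(\boldsymbol\mu)=\{\mathbf I-\mathbf G:\mathbf G\in\mathcal G(\boldsymbol\mu)\}$. A finite set $\mathcal Z$ of nonnegative $N\times N$ matrices is primitive if there is a positive integer $n$ such that every product of $n$ matrices from $\mathcal Z$ (any order, repetitions allowed) has all entries positive. $\mathbf e_i$ is the $i$-th standard basis vector, $\|\cdot\|$ the Euclidean norm, $\lambda(\cdot)$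 the Perron–Frobenius eigenvalue (spectral radius). *)

From Stdlib Require Import Reals List Arith.
Open Scope R_scope.

(* Vectors are functions nat -> R, only indices 0..N-1 matter;
   matrices are functions nat -> nat -> R. *)

Fixpoint sumN (n : nat) (f : nat -> R) : R :=
  match n with O => 0 | S m => sumN m f + f m end.

Fixpoint maxN (n : nat) (f : nat -> R) : R :=
  match n with O => f O | S m => Rmax (maxN m f) (f (S m)) end.
Fixpoint minN (n : nat) (f : nat -> R) : R :=
  match n with O => f O | S m => Rmin (minN m f) (f (S m)) end.

Definition delta (i j : nat) : R := if Nat.eqb i j then 1 else 0.

(* g i k j = g_{r_i^k, t_j} (indices from 0): gain from T_j to R_i^k *)

Definition sinr_k (N : nat) (g : nat -> nat -> nat -> R) (sigma2 : R)
  (p : nat -> R) (i k : nat) : R :=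
  g i k i * p i /
  (sumN N (fun j => if Nat.eqb j i then 0 else g i k j * p j) + sigma2).
Definition sinr (N : nat) (K : nat -> nat) (g : nat -> nat -> nat -> R)
  (sigma2 : R) (p : nat -> R) (i : nat) : R :=
  minN (K i - 1) (fun k => sinr_k N g sigma2 p i k).

Definition a_row (mu : nat -> R) (g : nat -> nat -> nat -> R) (i k j : nat) : R :=
  if Nat.eqb j i then 1 else - (mu i * g i k j / g i k i).

Definition is_sel (N : nat) (K : nat -> nat) (s : nat -> nat) : Prop :=
  forall i, (i < N)%nat -> (s i < K i)%nat.

(* Z = I - G, where G in G(mu) has i-th row a_i^{s i}(mu) *)
Definition Zmat (mu : nat -> R) (g : nat -> nat -> nat -> R) (s : nat -> nat)
  (i j : nat) : R := delta i j - a_row mu g i (s i) j.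

Definition mat_mul (N : nat) (A B : nat -> nat -> R) (i j : nat) : R :=
  sumN N (fun l => A i l * B l j).
Fixpoint mat_pow (N : nat) (A : nat -> nat -> R) (m : nat) : nat -> nat -> R :=
  match m with O => delta | S m' => mat_mul N (mat_pow N A m') A end.

Definition irreducible (N : nat) (A : nat -> nat -> R) : Prop :=
  forall i j, (i < N)%nat -> (j < N)%nat -> exists m, mat_pow N A m i j > 0.

Definition primitive_set (N : nat) (K : nat -> nat) (mu : nat -> R)
  (g : nat -> nat -> nat -> R) : Prop :=
  exists n : nat, (1 <= n)%nat /\
    forall l : list (nat -> nat), length l = n -> Forall (is_sel N K) l ->
      forall i j, (i < N)%nat -> (j < N)%nat ->
        fold_right (fun s M => mat_mul N (Zmat mu g s) M) delta l i j > 0.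

(* (a + i b) is a (complex) eigenvalue of the real N x N matrix A:
   A (x + i y) = (a + i b)(x + i y) for some nonzero complex vector x + i y *)
Definition is_eigenvalue (N : nat) (A : nat -> nat -> R) (a b : R) : Prop :=
  exists x y : nat -> R,
    (exists i, (i < N)%nat /\ (x i <> 0 \/ y i <> 0)) /\
    forall i, (i < N)%nat ->
      sumN N (fun j => A i j * x j) = a * x i - b * y i /\
      sumN N (fun j => A i j * y j) = a * y i + b * x i.

Definition is_spectral_radius (N : nat) (A : nat -> nat -> R) (rho : R) : Prop :=
  (exists a b, is_eigenvalue N A a b /\ rho = sqrt (a ^ 2 + b ^ 2)) /\
  (forall a b, is_eigenvalue N A a b -> sqrt (a ^ 2 + b ^ 2) <= rho).

Definition is_max_spectral_radius (N : nat) (K : nat -> nat) (mu : nat -> R)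
  (g : nat -> nat -> nat -> R) (rho : R) : Prop :=
  (exists s, is_sel N K s /\ is_spectral_radius N (Zmat mu g s) rho) /\
  (forall s r, is_sel N K s -> is_spectral_radius N (Zmat mu g s) r -> r <= rho).

Definition yvec (N : nat) (K : nat -> nat) (mu : nat -> R)
  (g : nat -> nat -> nat -> R) (p : nat -> R) (i : nat) : R :=
  maxN (K i - 1)
    (fun k => sumN N (fun j => (delta i j - a_row mu g i k j) * p j)).

Definition enorm (N : nat) (y : nat -> R) : R := sqrt (sumN N (fun i => y i ^ 2)).

Fixpoint piter (N : nat) (K : nat -> nat) (mu : nat -> R)
  (g : nat -> nat -> nat -> R) (p0 : nat -> R) (k : nat) : nat -> R :=
  match k with
  | O => p0
  | S k' => let y := yvec N K mu g (piter N K mu g p0 k') in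
            fun i => y i / enorm N y
  end.

Definition beta_iter (N : nat) (K : nat -> nat) (mu : nat -> R)
  (g : nat -> nat -> nat -> R) (p0 : nat -> R) (k : nat) : R :=
  let p := piter N K mu g p0 k in
  minN (N - 1) (fun i => p i / yvec N K mu g p i).

Definition lim_infty (f : R -> R) (l : R) : Prop :=
  forall eps, eps > 0 -> exists M, forall alpha, alpha > M -> Rabs (f alpha - l) < eps.

(* The update [p |-> y] is the max-linear map [T v = max_s Z_s v], the maximum over receiver
   selections [s] of the nonnegative matrices [Z_s] of [Z(mu)]; it is monotone and positively
   homogeneous. Hence along the iterates the Collatz-Wielandt bounds [min_i (T v)_i / v_i] and
   [max_i (T v)_i / v_i] increase and decrease. Primitivity makes every product of [n] selected
   matrices entrywise between some [c > 0] and [C], and this gives a Birkhoff-type contraction: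
   [n] steps shrink the gap between the two bounds by the factor [1 - c/C]. So both bounds tend
   to a common [lam], the normalized iterates are Cauchy, and their limit [p*] is positive with
   [T p* = lam p*]. The selection attaining the maximum at [p*] has eigenvalue [lam], while
   [Z_s p* <= lam p*] for every [s] bounds the modulus of every eigenvalue of every [Z_s] by
   [lam]. Finally, read receiver by receiver, [T p* = lam p*] says that the interference seen by
   the receivers of [T_i] at [p*] is at most, and for the worst one exactly, [lam / mu_i] times
   their signal, which is the SINR limit. *)

From Stdlib Require Import Reals List Arith Lra Lia Psatz FunctionalExtensionality.
From Coquelicot Require Import Complex.
Open Scope R_scope.

Lemma sumN_ext n f h : (forall i, (i < n)%nat -> f i = h i) -> sumN n f = sumN n h.
Proof. induction n; simpl; intros H; auto. f_equal; [apply IHn; intros|apply H]; auto; lia. Qed.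

Lemma sumN_le n f h : (forall i, (i < n)%nat -> f i <= h i) -> sumN n f <= sumN n h.
Proof.
  induction n; simpl; intros H; [lra|].
  assert (sumN n f <= sumN n h) by (apply IHn; intros; apply H; lia).
  specialize (H n ltac:(lia)); lra.
Qed.

Lemma sumN_nonneg n f : (forall i, (i < n)%nat -> 0 <= f i) -> 0 <= sumN n f.
Proof.
  induction n; simpl; intros H; [lra|].
  assert (0 <= sumN n f) by (apply IHn; intros; apply H; lia).
  specialize (H n ltac:(lia)); lra.
Qed.

Lemma sumN_plus n f h : sumN n (fun i => f i + h i) = sumN n f + sumN n h.
Proof. induction n; simpl; [lra|]. rewrite IHn; lra. Qed.

Lemma sumN_scal n c f : sumN n (fun i => c * f i) = c * sumN n f.
Proof. induction n; simpl; [lra|]. rewrite IHn; lra. Qed.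

Lemma sumN_const n a : sumN n (fun _ => a) = INR n * a.
Proof. induction n; simpl sumN; [simpl; ring|]. rewrite IHn, S_INR; ring. Qed.

Lemma sumN_split a b f : sumN (a + b) f = sumN a f + sumN b (fun i => f (a + i)%nat).
Proof.
  induction b; simpl; [rewrite Nat.add_0_r; ring|].
  rewrite Nat.add_succ_r; simpl. rewrite IHb; ring.
Qed.

Lemma sumN_ge_term n f j :
  (forall i, (i < n)%nat -> 0 <= f i) -> (j < n)%nat -> f j <= sumN n f.
Proof.
  induction n; simpl; intros H Hj; [lia|].
  assert (0 <= sumN n f) by (apply sumN_nonneg; intros; apply H; lia).
  destruct (Nat.eq_dec j n) as [->|]; [lra|].
  assert (f j <= sumN n f) by (apply IHn; [intros; apply H|]; lia).
  specialize (H n ltac:(lia)); lra.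
Qed.

Lemma sumN_swap n m (f : nat -> nat -> R) :
  sumN n (fun i => sumN m (fun j => f i j)) = sumN m (fun j => sumN n (fun i => f i j)).
Proof.
  induction n; simpl.
  - induction m; simpl; lra.
  - rewrite IHn, <- sumN_plus; auto.
Qed.

Lemma sumN_mat_vec n (a : nat -> R) (P : nat -> nat -> R) (w : nat -> R) :
  sumN n (fun k => a k * sumN n (fun j => P k j * w j))
  = sumN n (fun j => sumN n (fun k => a k * P k j) * w j).
Proof.
  rewrite (sumN_ext n _ (fun k => sumN n (fun j => a k * (P k j * w j))))
    by (intros; rewrite sumN_scal; auto).
  rewrite sumN_swap. apply sumN_ext; intros j _.
  rewrite Rmult_comm, <- sumN_scal. apply sumN_ext; intros; ring.
Qed.

Lemma sumN_neq0 n f : sumN n f <> 0 -> exists j, (j < n)%nat /\ f j <> 0.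
Proof.
  induction n; simpl; intros H; [lra|].
  destruct (Req_dec (f n) 0) as [E|E]; [|eauto].
  destruct IHn as [j [Hj Hf]]; [lra|]. exists j; split; [lia|auto].
Qed.

Lemma sumN_delta n i v : (i < n)%nat -> sumN n (fun j => delta i j * v j) = v i.
Proof.
  induction n; simpl; intros H; [lia|]. unfold delta at 2.
  destruct (Nat.eqb_spec i n) as [->|].
  - rewrite (sumN_ext n _ (fun _ => 0 * v 0%nat)), sumN_scal; [ring|].
    intros j Hj. unfold delta. destruct (Nat.eqb_spec n j); [lia|ring].
  - rewrite IHn by lia; ring.
Qed.

Lemma maxN_ge n f i : (i <= n)%nat -> f i <= maxN n f.
Proof.
  induction n; simpl; intros H.
  - replace i with 0%nat by lia; lra.
  - destruct (Nat.eq_dec i (S n)) as [->|]; [apply Rmax_r|].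
    eapply Rle_trans; [apply IHn; lia|apply Rmax_l].
Qed.

Lemma maxN_le n f a : (forall i, (i <= n)%nat -> f i <= a) -> maxN n f <= a.
Proof.
  induction n; simpl; intros H; [apply H; lia|].
  apply Rmax_lub; [apply IHn; intros|]; apply H; lia.
Qed.

Lemma maxN_mono n f h : (forall i, (i <= n)%nat -> f i <= h i) -> maxN n f <= maxN n h.
Proof.
  intros H. apply maxN_le. intros i Hi.
  eapply Rle_trans; [apply H; auto|apply maxN_ge; auto].
Qed.

Lemma maxN_ext n f h : (forall i, (i <= n)%nat -> f i = h i) -> maxN n f = maxN n h.
Proof. intros H; apply Rle_antisym; apply maxN_mono; intros; rewrite H; auto; lra. Qed.

Lemma maxN_scal n c f : 0 <= c -> maxN n (fun k => c * f k) = c * maxN n f.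
Proof. intros Hc; induction n; simpl; auto. rewrite IHn. apply RmaxRmult; auto. Qed.

Fixpoint argmaxN (n : nat) (f : nat -> R) : nat :=
  match n with
  | O => O
  | S m => if Rle_dec (maxN m f) (f (S m)) then S m else argmaxN m f
  end.

Lemma argmaxN_spec n f : (argmaxN n f <= n)%nat /\ maxN n f = f (argmaxN n f).
Proof.
  induction n; simpl; [split; auto|]. unfold Rmax.
  destruct (Rle_dec (maxN n f) (f (S n))); [split; auto|].
  destruct IHn; split; auto.
Qed.

Lemma minN_le n f i : (i <= n)%nat -> minN n f <= f i.
Proof.
  induction n; simpl; intros H.
  - replace i with 0%nat by lia; lra.
  - destruct (Nat.eq_dec i (S n)) as [->|]; [apply Rmin_r|].
    eapply Rle_trans; [apply Rmin_l|apply IHn; lia].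
Qed.

Lemma minN_ge n f a : (forall i, (i <= n)%nat -> a <= f i) -> a <= minN n f.
Proof.
  induction n; simpl; intros H; [apply H; lia|].
  apply Rmin_glb; [apply IHn; intros|]; apply H; lia.
Qed.

Lemma minN_ext n f h : (forall i, (i <= n)%nat -> f i = h i) -> minN n f = minN n h.
Proof.
  intros H; apply Rle_antisym; apply minN_ge; intros i Hi;
    [rewrite <- H|rewrite H]; auto; apply minN_le; auto.
Qed.

Lemma minN_attained n f : exists i, (i <= n)%nat /\ minN n f = f i.
Proof.
  induction n; simpl; [exists 0%nat; auto|].
  destruct IHn as [i [Hi E]]. unfold Rmin.
  destruct (Rle_dec (minN n f) (f (S n))); [exists i|exists (S n)]; auto.
Qed.

Lemma minN_pos n f : (forall i, (i <= n)%nat -> 0 < f i) -> 0 < minN n f.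
Proof. intros H. destruct (minN_attained n f) as [i [Hi ->]]. auto. Qed.
Lemma Un_cv_const c : Un_cv (fun _ => c) c.
Proof. intros eps He; exists 0%nat; intros; unfold Rdist; rewrite Rminus_diag, Rabs_R0; lra. Qed.

Lemma Un_cv_scal u a c : Un_cv u a -> Un_cv (fun k => c * u k) (c * a).
Proof. intros Hu. apply (CV_mult (fun _ => c)); auto using Un_cv_const. Qed.

Lemma Un_cv_inv u l : Un_cv u l -> l <> 0 -> Un_cv (fun k => / u k) (/ l).
Proof.
  intros Hu Hl. apply (continuity_seq (fun x => / id x) u l); auto.
  apply (continuity_pt_inv id); auto.
  apply derivable_continuous_pt, derivable_pt_id.
Qed.

Lemma Un_cv_lim_ge u l b : Un_cv u l -> (forall k, b <= u k) -> b <= l.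
Proof. intros Hu Hb. exact (Rle_cv_lim Hb (Un_cv_const b) Hu). Qed.

Lemma Un_cv_S u l : Un_cv u l -> Un_cv (fun k => u (S k)) l.
Proof. intros H eps He. destruct (H eps He) as [N0 HN0]. exists N0; intros; apply HN0; lia. Qed.

Lemma Un_cv_of_S u l : Un_cv (fun k => u (S k)) l -> Un_cv u l.
Proof.
  intros H eps He. destruct (H eps He) as [N0 HN0]. exists (S N0); intros [|k] Hk; [lia|].
  apply HN0; lia.
Qed.

Lemma Un_cv_squeeze (u a b : nat -> R) l :
  (forall t, a t <= u t <= b t) -> Un_cv a l -> Un_cv b l -> Un_cv u l.
Proof.
  intros H Ha Hb eps He.
  destruct (Ha eps He) as [N1 H1], (Hb eps He) as [N2 H2].
  exists (Nat.max N1 N2); intros t Ht.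
  specialize (H1 t ltac:(lia)); specialize (H2 t ltac:(lia)); specialize (H t).
  unfold Rdist in *. revert H1 H2; unfold Rabs; repeat destruct Rcase_abs; lra.
Qed.

Lemma Un_cv_sumN n (F : nat -> nat -> R) (l : nat -> R) :
  (forall j, (j < n)%nat -> Un_cv (fun t => F t j) (l j)) ->
  Un_cv (fun t => sumN n (F t)) (sumN n l).
Proof.
  induction n; simpl; intros H; [apply Un_cv_const|].
  apply CV_plus; [apply IHn; intros|]; apply H; lia.
Qed.

Lemma Rmax_dist a b c d : Rabs (Rmax a b - Rmax c d) <= Rabs (a - c) + Rabs (b - d).
Proof.
  unfold Rmax. destruct (Rle_dec a b), (Rle_dec c d); unfold Rabs;
    repeat destruct Rcase_abs; lra.
Qed.

Lemma Un_cv_maxN n (F : nat -> nat -> R) (l : nat -> R) :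
  (forall k, (k <= n)%nat -> Un_cv (fun t => F t k) (l k)) ->
  Un_cv (fun t => maxN n (F t)) (maxN n l).
Proof.
  induction n; simpl; intros H; [apply H; lia|].
  intros eps Heps.
  destruct (IHn ltac:(intros; apply H; lia) (eps / 2) ltac:(lra)) as [N1 H1].
  destruct (H (S n) ltac:(lia) (eps / 2) ltac:(lra)) as [N2 H2].
  exists (Nat.max N1 N2); intros t Ht. unfold Rdist in *.
  eapply Rle_lt_trans; [apply Rmax_dist|].
  specialize (H1 t ltac:(lia)); specialize (H2 t ltac:(lia)); lra.
Qed.

Section MaxLinear.
Variables (N : nat) (K : nat -> nat) (W : nat -> nat -> nat -> R).
Hypothesis HK : forall i, (i < N)%nat -> (1 <= K i)%nat.
Hypothesis HW : forall i k j, (i < N)%nat -> (k < K i)%nat -> (j < N)%nat -> 0 <= W i k j.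

Definition Tmax (v : nat -> R) (i : nat) : R :=
  maxN (K i - 1) (fun k => sumN N (fun j => W i k j * v j)).

Fixpoint Tmax_iter (m : nat) (v : nat -> R) : nat -> R :=
  match m with O => v | S m' => Tmax (Tmax_iter m' v) end.

Definition selmat (s : nat -> nat) (i j : nat) : R := W i (s i) j.

Definition selprod (l : list (nat -> nat)) : nat -> nat -> R :=
  fold_right (fun s M => mat_mul N (selmat s) M) delta l.

Definition maximizing_sel (v : nat -> R) (i : nat) : nat :=
  argmaxN (K i - 1) (fun k => sumN N (fun j => W i k j * v j)).

Definition positive_vec (v : nat -> R) : Prop := forall i, (i < N)%nat -> 0 < v i.

Lemma Tmax_maximizing_sel v i :
  Tmax v i = sumN N (fun j => selmat (maximizing_sel v) i j * v j).
Proof. apply argmaxN_spec. Qed.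

Lemma maximizing_sel_is_sel v : is_sel N K (maximizing_sel v).
Proof.
  intros i Hi. unfold maximizing_sel.
  destruct (argmaxN_spec (K i - 1) (fun k => sumN N (fun j => W i k j * v j))).
  specialize (HK i Hi); lia.
Qed.

Lemma Tmax_ge_sel v s i : is_sel N K s -> (i < N)%nat ->
  sumN N (fun j => selmat s i j * v j) <= Tmax v i.
Proof.
  intros Hs Hi. apply (maxN_ge _ (fun k => sumN N (fun j => W i k j * v j))).
  specialize (Hs i Hi); lia.
Qed.

Lemma Tmax_ext u v i : (forall j, (j < N)%nat -> u j = v j) -> Tmax u i = Tmax v i.
Proof.
  intros H. apply maxN_ext. intros k _. apply sumN_ext. intros j Hj; rewrite H; auto.
Qed.

Lemma Tmax_mono u v i : (forall j, (j < N)%nat -> u j <= v j) -> (i < N)%nat ->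
  Tmax u i <= Tmax v i.
Proof.
  intros H Hi. apply maxN_mono. intros k Hk. apply sumN_le. intros j Hj.
  apply Rmult_le_compat_l; auto. apply HW; auto. specialize (HK i Hi); lia.
Qed.

Lemma Tmax_scal v c i : 0 <= c -> Tmax (fun j => c * v j) i = c * Tmax v i.
Proof.
  intros Hc. unfold Tmax. rewrite <- maxN_scal by auto. apply maxN_ext. intros k _.
  rewrite <- sumN_scal. apply sumN_ext; intros; ring.
Qed.

Lemma Tmax_iter_ext m u v : (forall j, (j < N)%nat -> u j = v j) ->
  forall i, (i < N)%nat -> Tmax_iter m u i = Tmax_iter m v i.
Proof. induction m; simpl; intros H i Hi; auto. apply Tmax_ext; auto. Qed.

Lemma Tmax_iter_scal m v c : 0 <= c ->
  forall i, Tmax_iter m (fun j => c * v j) i = c * Tmax_iter m v i.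
Proof.
  intros Hc; induction m; simpl; intros i; auto.
  rewrite (Tmax_ext _ (fun j => c * Tmax_iter m v j)) by auto. apply Tmax_scal; auto.
Qed.

Lemma Tmax_iter_add a b v : Tmax_iter (a + b) v = Tmax_iter a (Tmax_iter b v).
Proof. induction a; simpl; congruence. Qed.

Lemma Tmax_Tmax_iter m v : Tmax (Tmax_iter m v) = Tmax_iter m (Tmax v).
Proof.
  change (Tmax_iter (S m) v = Tmax_iter m (Tmax_iter 1 v)).
  rewrite <- Tmax_iter_add, Nat.add_1_r; auto.
Qed.

Lemma selprod_cons s l i j :
  selprod (s :: l) i j = sumN N (fun k => selmat s i k * selprod l k j).
Proof. reflexivity. Qed.

Lemma Tmax_iter_selprod m v : exists l, length l = m /\ Forall (is_sel N K) l /\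
  forall i, (i < N)%nat -> Tmax_iter m v i = sumN N (fun j => selprod l i j * v j).
Proof.
  induction m as [|m [l [Hl [Hs H]]]].
  - exists nil; repeat split; auto. intros i Hi. simpl. rewrite sumN_delta; auto.
  - exists (maximizing_sel (Tmax_iter m v) :: l).
    repeat split; simpl; auto using maximizing_sel_is_sel.
    intros i Hi. rewrite Tmax_maximizing_sel.
    rewrite (sumN_ext N _ (fun k => selmat _ i k * sumN N (fun j => selprod l k j * v j)))
      by (intros; rewrite H; auto).
    apply sumN_mat_vec.
Qed.

Lemma Tmax_iter_superadd m v w : exists l, length l = m /\ Forall (is_sel N K) l /\
  forall i, (i < N)%nat ->
    Tmax_iter m v i + sumN N (fun j => selprod l i j * w j) <= Tmax_iter m (fun j => v j + w j) i.
Proof.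
  induction m as [|m [l [Hl [Hs H]]]].
  - exists nil; repeat split; auto. intros i Hi. simpl. rewrite sumN_delta; auto. lra.
  - exists (maximizing_sel (Tmax_iter m v) :: l).
    repeat split; simpl; auto using maximizing_sel_is_sel.
    intros i Hi. set (s := maximizing_sel (Tmax_iter m v)).
    eapply Rle_trans; [|apply (Tmax_mono (fun j => Tmax_iter m v j
      + sumN N (fun k => selprod l j k * w k))); auto].
    eapply Rle_trans; [|apply (Tmax_ge_sel _ s); auto using maximizing_sel_is_sel].
    assert (E : sumN N (fun j => selmat s i j
        * (Tmax_iter m v j + sumN N (fun k => selprod l j k * w k)))
      = Tmax (Tmax_iter m v) i + sumN N (fun j => mat_mul N (selmat s) (selprod l) i j * w j)).
    { rewrite (sumN_ext N _ (fun j => selmat s i j * Tmax_iter m v j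
        + selmat s i j * sumN N (fun k => selprod l j k * w k))) by (intros; ring).
      rewrite sumN_plus, sumN_mat_vec, Tmax_maximizing_sel. reflexivity. }
    + cbv beta. rewrite E. apply Rle_refl.
    + apply maximizing_sel_is_sel.
Qed.

Lemma selmat_nonneg s i j : is_sel N K s -> (i < N)%nat -> (j < N)%nat -> 0 <= selmat s i j.
Proof. intros Hs Hi Hj. apply HW; auto. Qed.

Lemma selprod_nonneg l : Forall (is_sel N K) l ->
  forall i j, (i < N)%nat -> (j < N)%nat -> 0 <= selprod l i j.
Proof.
  induction 1 as [|s l' Hs Hl' IH]; intros i j Hi Hj.
  - unfold selprod, delta; simpl. destruct (Nat.eqb i j); lra.
  - rewrite selprod_cons. apply sumN_nonneg. intros k Hk.
    apply Rmult_le_pos; auto using selmat_nonneg.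
Qed.

Lemma selprod_le l E : Forall (is_sel N K) l -> 0 <= E ->
  (forall i k j, (i < N)%nat -> (k < K i)%nat -> (j < N)%nat -> W i k j <= E) ->
  forall i j, (i < N)%nat -> (j < N)%nat -> selprod l i j <= (INR N * E) ^ length l.
Proof.
  intros Hl HE HWE. induction Hl as [|s l' Hs Hl' IH]; intros i j Hi Hj.
  - unfold selprod, delta; simpl. destruct (Nat.eqb i j); lra.
  - rewrite selprod_cons. simpl length. rewrite <- tech_pow_Rmult, Rmult_assoc, <- sumN_const.
    apply sumN_le. intros k Hk. apply Rmult_le_compat; auto using selmat_nonneg.
    + apply (selprod_nonneg l'); auto.
    + apply HWE; auto.
Qed.

(* A positive entry of a product contains a positive term, which is a product of positive
   entries. *)
Lemma selprod_pos_ge l e : Forall (is_sel N K) l -> 0 <= e ->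
  (forall i k j, (i < N)%nat -> (k < K i)%nat -> (j < N)%nat -> 0 < W i k j -> e <= W i k j) ->
  forall i j, (i < N)%nat -> (j < N)%nat -> 0 < selprod l i j -> e ^ length l <= selprod l i j.
Proof.
  intros Hl He HWe. induction Hl as [|s l' Hs Hl' IH]; intros i j Hi Hj Hpos.
  - revert Hpos; unfold selprod, delta; simpl. destruct (Nat.eqb i j); lra.
  - rewrite selprod_cons in *.
    destruct (sumN_neq0 N (fun k => selmat s i k * selprod l' k j)) as [k [Hk Hnz]]; [lra|].
    assert (H1 := selmat_nonneg s i k Hs Hi Hk).
    assert (H2 := selprod_nonneg l' Hl' k j Hk Hj).
    assert (0 < selmat s i k) by (destruct H1 as [|E]; [auto|rewrite <- E in Hnz; lra]).
    assert (0 < selprod l' k j) by (destruct H2 as [|E]; [auto|rewrite <- E in Hnz; lra]).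
    eapply Rle_trans; [|apply (sumN_ge_term N _ k); auto].
    + simpl. apply Rmult_le_compat; [|apply pow_le|apply HWe|apply IH]; auto.
    + intros; apply Rmult_le_pos; auto using selmat_nonneg, selprod_nonneg.
Qed.

Lemma W_entry_bounds : exists e E, 0 < e /\ 0 <= E /\
  forall i k j, (i < N)%nat -> (k < K i)%nat -> (j < N)%nat ->
    W i k j <= E /\ (0 < W i k j -> e <= W i k j).
Proof.
  (* [h] agrees with [W] on positive entries and is positive everywhere. *)
  set (h i k j := if Rlt_dec 0 (W i k j) then W i k j else 1).
  assert (Hh : forall i k j, 0 < h i k j) by (intros; unfold h; destruct Rlt_dec; lra).
  assert (HWh : forall i k j, W i k j <= h i k j /\ (0 < W i k j -> h i k j = W i k j)).
  { intros; unfold h; destruct Rlt_dec; split; intros; lra. }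
  set (E := maxN (N - 1) (fun i => maxN (K i - 1) (fun k => maxN (N - 1) (h i k)))).
  assert (HE : forall i k j, (i <= N - 1)%nat -> (k <= K i - 1)%nat -> (j <= N - 1)%nat ->
    h i k j <= E).
  { intros i k j Hi Hk Hj.
    eapply Rle_trans; [|apply (maxN_ge _ (fun i => maxN (K i - 1) _) i Hi)].
    eapply Rle_trans; [|apply (maxN_ge _ (fun k => maxN (N - 1) (h i k)) k Hk)].
    apply maxN_ge; auto. }
  exists (minN (N - 1) (fun i => minN (K i - 1) (fun k => minN (N - 1) (h i k)))), E.
  split; [|split].
  - repeat (apply minN_pos; intros); auto.
  - specialize (HE 0%nat 0%nat 0%nat ltac:(lia) ltac:(lia) ltac:(lia)).
    specialize (Hh 0%nat 0%nat 0%nat); lra.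
  - intros i k j Hi Hk Hj. destruct (HWh i k j) as [H1 H2]. split.
    + eapply Rle_trans; [apply H1|apply HE; lia].
    + intros Hpos. rewrite <- H2 by auto.
      eapply Rle_trans; [apply (minN_le _ (fun i => minN (K i - 1) _) i); lia|].
      eapply Rle_trans; [apply (minN_le _ (fun k => minN (N - 1) (h i k)) k); lia|].
      apply minN_le; lia.
Qed.

Definition primitive_sels (n : nat) : Prop := (1 <= n)%nat /\
  forall l, length l = n -> Forall (is_sel N K) l ->
    forall i j, (i < N)%nat -> (j < N)%nat -> selprod l i j > 0.

Hypothesis HN : (1 <= N)%nat.

Lemma zero_sel_is_sel : is_sel N K (fun _ => O).
Proof. intros i Hi. specialize (HK i Hi); lia. Qed.

Lemma primitive_selprod_bounds n : primitive_sels n -> exists c C, 0 < c <= C /\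
  forall l, length l = n -> Forall (is_sel N K) l ->
    forall i j, (i < N)%nat -> (j < N)%nat -> c <= selprod l i j <= C.
Proof.
  intros [_ Hprim]. destruct W_entry_bounds as [e [E [He [HE HeE]]]].
  assert (Hbounds : forall l, length l = n -> Forall (is_sel N K) l ->
    forall i j, (i < N)%nat -> (j < N)%nat -> e ^ n <= selprod l i j <= (INR N * E) ^ n).
  { intros l Hl Hs i j Hi Hj. subst n. split.
    - apply selprod_pos_ge; auto; [lra|intros; apply HeE; auto|apply Hprim; auto].
    - apply selprod_le; auto. intros; apply HeE; auto. }
  exists (e ^ n), ((INR N * E) ^ n). split; [split|exact Hbounds].
  - apply pow_lt; auto.
  - assert (Hrep : Forall (is_sel N K) (repeat (fun _ => O) n)).
    { apply Forall_forall; intros s Hs. apply repeat_spec in Hs; subst; apply zero_sel_is_sel. }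
    destruct (Hbounds _ (repeat_length _ _) Hrep 0%nat 0%nat ltac:(lia) ltac:(lia)); lra.
Qed.

Lemma selmat_row_pos n s i : primitive_sels n -> is_sel N K s -> (i < N)%nat ->
  exists j, (j < N)%nat /\ 0 < selmat s i j.
Proof.
  intros [Hn Hprim] Hs Hi. destruct n as [|n']; [lia|].
  assert (Hrep : Forall (is_sel N K) (s :: repeat s n')).
  { constructor; auto. apply Forall_forall; intros x Hx. apply repeat_spec in Hx; subst; auto. }
  assert (H := Hprim (s :: repeat s n') (f_equal S (repeat_length s n')) Hrep i i Hi Hi).
  rewrite selprod_cons in H.
  destruct (sumN_neq0 N (fun k => selmat s i k * selprod (repeat s n') k i))
    as [j [Hj Hnz]]; [lra|].
  exists j; split; auto. destruct (selmat_nonneg s i j Hs Hi Hj) as [|E]; auto.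
  rewrite <- E in Hnz; lra.
Qed.

Lemma Tmax_pos n v : primitive_sels n -> positive_vec v -> positive_vec (Tmax v).
Proof.
  intros Hprim Hv i Hi. set (s := maximizing_sel v).
  destruct (selmat_row_pos n s i Hprim (maximizing_sel_is_sel v) Hi) as [j [Hj Hpos]].
  rewrite Tmax_maximizing_sel.
  eapply Rlt_le_trans; [|apply (sumN_ge_term N (fun j => selmat s i j * v j) j); auto].
  - apply Rmult_lt_0_compat; auto.
  - intros k Hk. apply Rmult_le_pos; [apply selmat_nonneg|left; apply Hv]; auto.
    apply maximizing_sel_is_sel.
Qed.

Lemma Tmax_iter_pos n m v : primitive_sels n -> positive_vec v -> positive_vec (Tmax_iter m v).
Proof. intros Hprim Hv; induction m; simpl; auto. eapply Tmax_pos; eauto. Qed.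

End MaxLinear.

Lemma Rdiv_mult_le_of_le G D x : 0 <= G -> 0 < D -> x <= D -> G / D * x <= G.
Proof.
  intros HG HD Hx. apply Rle_trans with (G / D * D).
  - apply Rmult_le_compat_l; auto. unfold Rdiv; apply Rmult_le_pos; [|left; apply Rinv_0_lt_compat]; lra.
  - right; field; lra.
Qed.

Section CollatzWielandt.
Variables (N : nat) (K : nat -> nat) (W : nat -> nat -> nat -> R).
Hypothesis HN : (1 <= N)%nat.
Hypothesis HK : forall i, (i < N)%nat -> (1 <= K i)%nat.
Hypothesis HW : forall i k j, (i < N)%nat -> (k < K i)%nat -> (j < N)%nat -> 0 <= W i k j.

Local Notation T := (Tmax N K W).
Local Notation Tn := (Tmax_iter N K W).
Local Notation pos := (positive_vec N).

Definition cw_lower (v : nat -> R) : R := minN (N - 1) (fun i => T v i / v i).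
Definition cw_upper (v : nat -> R) : R := maxN (N - 1) (fun i => T v i / v i).

Lemma cw_lower_spec v i : pos v -> (i < N)%nat -> cw_lower v * v i <= T v i.
Proof.
  intros Hv Hi. assert (H := minN_le (N - 1) (fun i => T v i / v i) i ltac:(lia)).
  specialize (Hv i Hi). apply (Rmult_le_compat_r (v i)) in H; [|lra].
  unfold cw_lower. field_simplify in H; lra.
Qed.

Lemma cw_upper_spec v i : pos v -> (i < N)%nat -> T v i <= cw_upper v * v i.
Proof.
  intros Hv Hi. assert (H := maxN_ge (N - 1) (fun i => T v i / v i) i ltac:(lia)).
  specialize (Hv i Hi). apply (Rmult_le_compat_r (v i)) in H; [|lra].
  unfold cw_upper. field_simplify in H; lra.
Qed.

Lemma cw_lower_ge v a : pos v -> (forall i, (i < N)%nat -> a * v i <= T v i) ->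
  a <= cw_lower v.
Proof.
  intros Hv H. apply minN_ge. intros i Hi.
  specialize (H i ltac:(lia)). specialize (Hv i ltac:(lia)).
  apply (Rmult_le_reg_r (v i)); auto. field_simplify; lra.
Qed.

Lemma cw_upper_le v a : pos v -> (forall i, (i < N)%nat -> T v i <= a * v i) ->
  cw_upper v <= a.
Proof.
  intros Hv H. apply maxN_le. intros i Hi.
  specialize (H i ltac:(lia)). specialize (Hv i ltac:(lia)).
  apply (Rmult_le_reg_r (v i)); auto. field_simplify; lra.
Qed.

Lemma cw_lower_le_upper v : cw_lower v <= cw_upper v.
Proof.
  eapply Rle_trans; [apply (minN_le _ _ 0%nat); lia|].
  apply (maxN_ge _ (fun i => T v i / v i)); lia.
Qed.

Variable n : nat.
Hypothesis Hprim : primitive_sels N K W n.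

Lemma cw_lower_pos v : pos v -> 0 < cw_lower v.
Proof.
  intros Hv. unfold cw_lower. destruct (minN_attained (N - 1) (fun i => T v i / v i)) as [i [Hi ->]].
  apply Rdiv_lt_0_compat; [eapply Tmax_pos|apply Hv]; eauto; lia.
Qed.

Lemma cw_lower_Tmax v : pos v -> cw_lower v <= cw_lower (T v).
Proof.
  intros Hv. assert (Hm := cw_lower_pos v Hv).
  apply cw_lower_ge; [eapply Tmax_pos; eauto|]. intros i Hi.
  rewrite <- Tmax_scal by lra. apply Tmax_mono; auto. intros; apply cw_lower_spec; auto.
Qed.

Lemma cw_upper_Tmax v : pos v -> cw_upper (T v) <= cw_upper v.
Proof.
  intros Hv. assert (Hm := cw_lower_pos v Hv). assert (H := cw_lower_le_upper v).
  apply cw_upper_le; [eapply Tmax_pos; eauto|]. intros i Hi.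
  rewrite <- Tmax_scal by lra. apply Tmax_mono; auto. intros; apply cw_upper_spec; auto.
Qed.

Variables c C : R.
Hypothesis Hc : 0 < c <= C.
Hypothesis Hbounds : forall l, length l = n -> Forall (is_sel N K) l ->
  forall i j, (i < N)%nat -> (j < N)%nat -> c <= selprod N W l i j <= C.

Lemma Tmax_iter_le_sum y i : (forall j, (j < N)%nat -> 0 <= y j) -> (i < N)%nat ->
  Tn n y i <= C * sumN N y.
Proof.
  intros Hy Hi. destruct (Tmax_iter_selprod N K W HK n y) as [l [Hl [Hs ->]]]; auto.
  rewrite <- sumN_scal. apply sumN_le. intros j Hj.
  apply Rmult_le_compat_r; auto. apply Hbounds; auto.
Qed.

Lemma Tmax_iter_ge_sum y i : (forall j, (j < N)%nat -> 0 <= y j) -> (i < N)%nat ->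
  c * sumN N y <= Tn n y i.
Proof.
  intros Hy Hi. destruct (Tmax_iter_selprod N K W HK n y) as [l [Hl [Hs ->]]]; auto.
  rewrite <- sumN_scal. apply sumN_le. intros j Hj.
  apply Rmult_le_compat_r; auto. apply Hbounds; auto.
Qed.

Lemma Tmax_iter_gain v w i : (forall j, (j < N)%nat -> 0 <= w j) -> (i < N)%nat ->
  Tn n v i + c * sumN N w <= Tn n (fun j => v j + w j) i.
Proof.
  intros Hw Hi. destruct (Tmax_iter_superadd N K W HK HW n v w) as [l [Hl [Hs H]]].
  eapply Rle_trans; [|apply H; auto]. apply Rplus_le_compat_l.
  rewrite <- sumN_scal. apply sumN_le. intros j Hj.
  apply Rmult_le_compat_r; auto. apply Hbounds; auto.
Qed.

Lemma sumN_pos_vec y : pos y -> 0 < sumN N y.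
Proof.
  intros Hy. eapply Rlt_le_trans; [apply (Hy 0%nat); lia|].
  apply (sumN_ge_term N y 0%nat); [intros; left; apply Hy|]; auto.
Qed.

Lemma cw_lower_Tmax_iter_gain y : pos y ->
  cw_lower y + c * sumN N (fun j => T y j - cw_lower y * y j) / (C * sumN N y)
  <= cw_lower (Tn n y).
Proof.
  intros Hy. set (al := cw_lower y). set (A := sumN N (fun j => T y j - al * y j)).
  assert (Hslack : forall j, (j < N)%nat -> 0 <= T y j - al * y j)
    by (intros j Hj; assert (H := cw_lower_spec y j Hy Hj); fold al in H; lra).
  assert (HA : 0 <= A) by (apply sumN_nonneg; auto).
  assert (Hal : 0 < al) by (apply cw_lower_pos; auto).
  assert (HCS : 0 < C * sumN N y) by (apply Rmult_lt_0_compat; [lra|apply sumN_pos_vec; auto]).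
  apply cw_lower_ge; [eapply Tmax_iter_pos; eauto|]. intros i Hi.
  assert (Hgain : al * Tn n y i + c * A <= T (Tn n y) i).
  { rewrite <- Tmax_iter_scal by lra.
    rewrite Tmax_Tmax_iter, (Tmax_iter_ext N K W n (T y) (fun j => al * y j + (T y j - al * y j)))
      by (auto; intros; ring).
    apply Tmax_iter_gain; auto. }
  assert (Hup := Tmax_iter_le_sum y i (fun j Hj => Rlt_le _ _ (Hy j Hj)) Hi).
  assert (H := Rdiv_mult_le_of_le (c * A) (C * sumN N y) (Tn n y i) ltac:(nra) HCS Hup).
  unfold Rdiv in *. nra.
Qed.

Lemma cw_upper_Tmax_iter_gain y : pos y ->
  cw_upper (Tn n y)
  <= cw_upper y - c * sumN N (fun j => cw_upper y * y j - T y j) / (C * sumN N y).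
Proof.
  intros Hy. set (be := cw_upper y). set (B := sumN N (fun j => be * y j - T y j)).
  assert (Hslack : forall j, (j < N)%nat -> 0 <= be * y j - T y j)
    by (intros j Hj; assert (H := cw_upper_spec y j Hy Hj); fold be in H; lra).
  assert (HB : 0 <= B) by (apply sumN_nonneg; auto).
  assert (Hbe : 0 < be) by (eapply Rlt_le_trans; [apply cw_lower_pos|apply cw_lower_le_upper]; auto).
  assert (HCS : 0 < C * sumN N y) by (apply Rmult_lt_0_compat; [lra|apply sumN_pos_vec; auto]).
  apply cw_upper_le; [eapply Tmax_iter_pos; eauto|]. intros i Hi.
  assert (Hgain : T (Tn n y) i + c * B <= be * Tn n y i).
  { rewrite <- Tmax_iter_scal by lra.
    rewrite Tmax_Tmax_iter, (Tmax_iter_ext N K W n (fun j => be * y j) (fun j => T y j + (be * y j - T y j)))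
      by (auto; intros; ring).
    apply Tmax_iter_gain; auto. }
  assert (Hup := Tmax_iter_le_sum y i (fun j Hj => Rlt_le _ _ (Hy j Hj)) Hi).
  assert (H := Rdiv_mult_le_of_le (c * B) (C * sumN N y) (Tn n y i) ltac:(nra) HCS Hup).
  unfold Rdiv in *. nra.
Qed.

(* The two slacks in the gains above add up to [(cw_upper y - cw_lower y) * sumN N y]. *)
Lemma cw_gap_contraction y : pos y ->
  cw_upper (Tn n y) - cw_lower (Tn n y) <= (1 - c / C) * (cw_upper y - cw_lower y).
Proof.
  intros Hy. assert (H1 := cw_lower_Tmax_iter_gain y Hy). assert (H2 := cw_upper_Tmax_iter_gain y Hy).
  assert (HS := sumN_pos_vec y Hy).
  set (al := cw_lower y) in *. set (be := cw_upper y) in *.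
  assert (HAB : sumN N (fun j => T y j - al * y j) + sumN N (fun j => be * y j - T y j)
    = (be - al) * sumN N y).
  { rewrite <- sumN_plus, <- sumN_scal. apply sumN_ext; intros; ring. }
  assert (E : c * sumN N (fun j => T y j - al * y j) / (C * sumN N y)
    + c * sumN N (fun j => be * y j - T y j) / (C * sumN N y) = c / C * (be - al)).
  { unfold Rdiv. rewrite <- Rmult_plus_distr_r, <- Rmult_plus_distr_l, HAB. field; lra. }
  lra.
Qed.

End CollatzWielandt.

Section GeometricCauchy.
Variables (u e : nat -> R) (n : nat) (th : R).
Hypothesis Hn : (1 <= n)%nat.
Hypothesis Hth : 0 <= th < 1.
Hypothesis He0 : forall k, 0 <= e k.
Hypothesis Hdec : forall k, e (S k) <= e k.
Hypothesis Hcontr : forall k, e (n + k)%nat <= th * e k.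
Hypothesis Hlim : Un_cv e 0.
Hypothesis Hstep : forall k, Rabs (u (S k) - u k) <= e k.

Lemma geometric_antitone a b : (a <= b)%nat -> e b <= e a.
Proof. induction 1; [lra|eapply Rle_trans; [apply Hdec|auto]]. Qed.

(* Blocks of [n] consecutive terms shrink geometrically. *)
Lemma geometric_tail_sum j k : sumN j (fun i => e (k + i)%nat) <= INR n * e k / (1 - th).
Proof.
  revert k; induction j as [j IH] using lt_wf_ind; intros k.
  assert (Hn' : 1 <= INR n) by (apply (le_INR 1); auto).
  assert (Hblock : forall m, (m <= n)%nat -> sumN m (fun i => e (k + i)%nat) <= INR n * e k).
  { intros m Hm. eapply Rle_trans; [apply (sumN_le m _ (fun _ => e k))|].
    - intros i Hi. apply geometric_antitone; lia.
    - rewrite sumN_const. apply Rmult_le_compat_r; auto. apply le_INR; auto. }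
  assert (Hq : INR n * e k <= INR n * e k / (1 - th)).
  { assert (0 <= INR n * e k) by (specialize (He0 k); nra).
    assert (1 <= / (1 - th)) by (rewrite <- Rinv_1; apply Rinv_le_contravar; lra).
    unfold Rdiv; nra. }
  destruct (le_lt_dec j n) as [Hj|Hj]; [specialize (Hblock j Hj); lra|].
  replace j with (n + (j - n))%nat by lia. rewrite sumN_split.
  assert (H2 : sumN (j - n) (fun i => e (k + (n + i))%nat) <= INR n * e (n + k)%nat / (1 - th)).
  { rewrite (sumN_ext _ _ (fun i => e ((n + k) + i)%nat)) by (intros; f_equal; lia).
    apply IH; lia. }
  assert (H3 : INR n * e (n + k)%nat / (1 - th) <= INR n * (th * e k) / (1 - th)).
  { unfold Rdiv. apply Rmult_le_compat_r; [left; apply Rinv_0_lt_compat; lra|].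
    apply Rmult_le_compat_l; [lra|apply Hcontr]. }
  assert (E : INR n * e k + INR n * (th * e k) / (1 - th) = INR n * e k / (1 - th)) by (field; lra).
  specialize (Hblock n (le_n n)). lra.
Qed.

Lemma geometric_dist j k : Rabs (u (k + j)%nat - u k) <= sumN j (fun i => e (k + i)%nat).
Proof.
  induction j; simpl; [rewrite Nat.add_0_r, Rminus_diag, Rabs_R0; lra|].
  rewrite Nat.add_succ_r. specialize (Hstep (k + j)%nat).
  replace (u (S (k + j)) - u k) with ((u (S (k + j)) - u (k + j)%nat) + (u (k + j)%nat - u k))
    by ring.
  eapply Rle_trans; [apply Rabs_triang|lra].
Qed.

Lemma geometric_cauchy : Cauchy_crit u.
Proof.
  intros eps Heps. assert (Hn' : 1 <= INR n) by (apply (le_INR 1); auto).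
  destruct (Hlim (eps * (1 - th) / (3 * INR n))) as [K0 HK0].
  { apply Rdiv_lt_0_compat; [apply Rmult_lt_0_compat|]; lra. }
  exists K0. intros a b Ha Hb. specialize (HK0 K0 (le_n _)). unfold Rdist in *.
  rewrite Rminus_0_r, Rabs_right in HK0 by (apply Rle_ge; auto).
  assert (Hb1 := geometric_dist (a - K0) K0). assert (Hb2 := geometric_dist (b - K0) K0).
  replace (K0 + (a - K0))%nat with a in Hb1 by lia.
  replace (K0 + (b - K0))%nat with b in Hb2 by lia.
  assert (T1 := geometric_tail_sum (a - K0) K0). assert (T2 := geometric_tail_sum (b - K0) K0).
  assert (Q : INR n * e K0 / (1 - th) < eps / 3).
  { apply (Rmult_lt_reg_r ((1 - th) / INR n)); [apply Rdiv_lt_0_compat; lra|].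
    replace (INR n * e K0 / (1 - th) * ((1 - th) / INR n)) with (e K0) by (field; lra).
    replace (eps / 3 * ((1 - th) / INR n)) with (eps * (1 - th) / (3 * INR n)) by (field; lra).
    auto. }
  replace (u a - u b) with ((u a - u K0) - (u b - u K0)) by ring.
  eapply Rle_lt_trans; [apply Rabs_triang|]. rewrite Rabs_Ropp. lra.
Qed.

End GeometricCauchy.

Lemma enorm_scal N c y : 0 <= c -> enorm N (fun i => c * y i) = c * enorm N y.
Proof.
  intros Hc. unfold enorm.
  rewrite (sumN_ext N _ (fun i => (c * c) * y i ^ 2)) by (intros; ring).
  rewrite sumN_scal, sqrt_mult_alt by nra. rewrite sqrt_square; auto.
Qed.

Lemma enorm_pos N y : (1 <= N)%nat -> positive_vec N y -> 0 < enorm N y.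
Proof.
  intros HN Hy. unfold enorm. apply sqrt_lt_R0.
  eapply Rlt_le_trans; [|apply (sumN_ge_term N (fun i => y i ^ 2) 0%nat);
    [intros; apply pow2_ge_0|lia]].
  specialize (Hy 0%nat ltac:(lia)). nra.
Qed.

Lemma enorm_mono N u v : (forall i, (i < N)%nat -> 0 <= u i <= v i) -> enorm N u <= enorm N v.
Proof.
  intros H. apply sqrt_le_1_alt. apply sumN_le. intros i Hi. specialize (H i Hi). nra.
Qed.

Lemma enorm_sq N y : sumN N (fun i => y i ^ 2) = enorm N y ^ 2.
Proof.
  unfold enorm. rewrite pow2_sqrt; auto.
  apply sumN_nonneg; intros; apply pow2_ge_0.
Qed.

Lemma enorm_unit_coord_le N y i : enorm N y = 1 -> (i < N)%nat -> 0 <= y i -> y i <= 1.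
Proof.
  intros E Hi Hy.
  assert (y i ^ 2 <= 1).
  { replace 1 with (enorm N y ^ 2) by (rewrite E; ring). rewrite <- enorm_sq.
    apply (sumN_ge_term N (fun i => y i ^ 2)); auto. intros; apply pow2_ge_0. }
  nra.
Qed.

Lemma enorm_between N p y m M : enorm N p = 1 -> 0 <= m <= M ->
  (forall i, (i < N)%nat -> 0 <= p i /\ m * p i <= y i <= M * p i) ->
  m <= enorm N y <= M.
Proof.
  intros Hp Hm H. split.
  - rewrite <- (Rmult_1_r m), <- Hp, <- enorm_scal by lra. apply enorm_mono.
    intros i Hi. specialize (H i Hi). split; nra.
  - rewrite <- (Rmult_1_r M), <- Hp, <- enorm_scal by lra. apply enorm_mono.
    intros i Hi. specialize (H i Hi). split; nra.
Qed.

Lemma normalized_step_bound m0 m M r p t : 0 < m0 <= m -> m <= r <= M -> 0 <= p <= 1 ->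
  m * p <= t <= M * p -> Rabs (t / r - p) <= (M - m) / m0.
Proof.
  intros Hm Hr Hp Ht.
  replace (t / r - p) with ((t - r * p) * / r) by (field; lra).
  assert (Hd : Rabs (t - r * p) <= M - m) by (apply Rabs_le; nra).
  rewrite Rabs_mult, Rabs_inv, (Rabs_right r) by lra.
  apply Rmult_le_compat; [apply Rabs_pos|left; apply Rinv_0_lt_compat; lra|auto|].
  apply Rinv_le_contravar; lra.
Qed.

Lemma ratio_inv_bounds m M p t : 0 < m -> 0 < p -> m * p <= t <= M * p -> / M <= p / t <= / m.
Proof.
  intros Hm Hp Ht. assert (HM : 0 < M) by nra.
  replace (p / t) with (/ (t / p)) by (field; nra). split.
  - apply Rinv_le_contravar; [apply Rdiv_lt_0_compat; nra|].
    apply (Rmult_le_reg_r p); auto. unfold Rdiv; rewrite Rmult_assoc, Rinv_l; lra.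
  - apply Rinv_le_contravar; auto.
    apply (Rmult_le_reg_r p); auto. unfold Rdiv; rewrite Rmult_assoc, Rinv_l; lra.
Qed.

Lemma Un_cv_Tmax N K W (q : nat -> nat -> R) (l : nat -> R) i :
  (forall j, (j < N)%nat -> Un_cv (fun t => q t j) (l j)) ->
  Un_cv (fun t => Tmax N K W (q t) i) (Tmax N K W l i).
Proof.
  intros H. apply (Un_cv_maxN (K i - 1) (fun t k => sumN N (fun j => W i k j * q t j))).
  intros k _. apply (Un_cv_sumN N (fun t j => W i k j * q t j)).
  intros j Hj. apply Un_cv_scal; auto.
Qed.

Fixpoint normalized_iter N K W (p0 : nat -> R) (k : nat) : nat -> R :=
  match k with
  | O => p0
  | S k' => let y := Tmax N K W (normalized_iter N K W p0 k') in fun i => y i / enorm N y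
  end.

Section PowerIteration.
Variables (N : nat) (K : nat -> nat) (W : nat -> nat -> nat -> R) (n : nat) (p0 : nat -> R).
Variables c C : R.
Hypothesis HN : (1 <= N)%nat.
Hypothesis HK : forall i, (i < N)%nat -> (1 <= K i)%nat.
Hypothesis HW : forall i k j, (i < N)%nat -> (k < K i)%nat -> (j < N)%nat -> 0 <= W i k j.
Hypothesis Hprim : primitive_sels N K W n.
Hypothesis Hp0 : positive_vec N p0.
Hypothesis Hc : 0 < c <= C.
Hypothesis Hbounds : forall l, length l = n -> Forall (is_sel N K) l ->
  forall i j, (i < N)%nat -> (j < N)%nat -> c <= selprod N W l i j <= C.

Local Notation T := (Tmax N K W).
Local Notation pos := (positive_vec N).
Local Notation z k := (Tmax_iter N K W k p0).
Local Notation p := (normalized_iter N K W p0).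

Definition lower_seq (k : nat) : R := cw_lower N K W (z k).
Definition upper_seq (k : nat) : R := cw_upper N K W (z k).

Lemma iter_pos k : pos (z k).
Proof. eapply Tmax_iter_pos; eauto. Qed.

Lemma lower_seq_pos k : 0 < lower_seq k.
Proof. eapply cw_lower_pos; eauto using iter_pos. Qed.

Lemma lower_le_upper_seq k : lower_seq k <= upper_seq k.
Proof. apply cw_lower_le_upper; auto. Qed.

Lemma lower_seq_incr a b : (a <= b)%nat -> lower_seq a <= lower_seq b.
Proof.
  induction 1; [lra|]. eapply Rle_trans; [apply IHle|].
  eapply cw_lower_Tmax; eauto using iter_pos.
Qed.

Lemma upper_seq_decr a b : (a <= b)%nat -> upper_seq b <= upper_seq a.
Proof.
  induction 1; [lra|]. eapply Rle_trans; [|apply IHle].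
  eapply cw_upper_Tmax; eauto using iter_pos.
Qed.

Lemma lower_le_upper_seq_any a b : lower_seq a <= upper_seq b.
Proof.
  eapply Rle_trans; [apply (lower_seq_incr a (Nat.max a b)); lia|].
  eapply Rle_trans; [apply lower_le_upper_seq|apply upper_seq_decr; lia].
Qed.

Lemma seq_gap_contraction k :
  upper_seq (k + n) - lower_seq (k + n) <= (1 - c / C) * (upper_seq k - lower_seq k).
Proof.
  unfold upper_seq, lower_seq. rewrite Nat.add_comm, Tmax_iter_add.
  eapply cw_gap_contraction; eauto using iter_pos.
Qed.

Lemma seq_common_limit : { lam : R | Un_cv lower_seq lam /\ Un_cv upper_seq lam }.
Proof.
  destruct (growing_cv lower_seq) as [l1 H1].
  { intro k; apply lower_seq_incr; lia. }
  { exists (upper_seq 0). intros x [k ->]. apply lower_le_upper_seq_any. }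
  destruct (decreasing_cv upper_seq) as [l2 H2].
  { intro k; apply upper_seq_decr; lia. }
  { exists (- lower_seq 0). intros x [k ->]. unfold opp_seq.
    assert (H := lower_le_upper_seq_any 0 k). lra. }
  exists l1. split; auto.
  assert (L12 : l1 <= l2) by (apply (Rle_cv_lim (fun k => lower_le_upper_seq k)); auto).
  assert (Hgap := CV_minus _ _ _ _ H2 H1).
  assert (Hgap' := Un_cv_scal _ _ (1 - c / C) Hgap).
  assert (Hle := Rle_cv_lim seq_gap_contraction (CV_shift' _ n _ Hgap) Hgap').
  assert (0 < c / C) by (apply Rdiv_lt_0_compat; lra).
  replace l1 with l2 by nra. auto.
Qed.

Definition lam : R := proj1_sig seq_common_limit.

Lemma lower_seq_cv : Un_cv lower_seq lam.
Proof. exact (proj1 (proj2_sig seq_common_limit)). Qed.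

Lemma upper_seq_cv : Un_cv upper_seq lam.
Proof. exact (proj2 (proj2_sig seq_common_limit)). Qed.

Lemma lam_pos : 0 < lam.
Proof.
  apply Rlt_le_trans with (lower_seq 0); [apply lower_seq_pos|].
  apply (Un_cv_lim_ge _ _ _ lower_seq_cv). intros; apply lower_seq_incr; lia.
Qed.

Lemma normalized_iter_scaled k : exists a, 0 < a /\ forall i, p k i = a * z k i.
Proof.
  induction k as [|k [a [Ha E]]]; [exists 1; split; [lra|intros; simpl; ring]|].
  assert (Ty : T (p k) = fun i => a * z (S k) i).
  { apply functional_extensionality; intros i. simpl.
    rewrite (Tmax_ext _ _ _ _ (fun j => a * z k j)) by auto. apply Tmax_scal; lra. }
  assert (Hn : 0 < enorm N (z (S k))) by (apply enorm_pos; auto; apply iter_pos).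
  exists (/ enorm N (z (S k))). split; [apply Rinv_0_lt_compat; auto|].
  intros i. change (p (S k) i) with (T (p k) i / enorm N (T (p k))).
  rewrite Ty, enorm_scal by lra. field. lra.
Qed.

Lemma normalized_iter_pos k : pos (p k).
Proof.
  destruct (normalized_iter_scaled k) as [a [Ha E]]. intros i Hi. rewrite E.
  apply Rmult_lt_0_compat; auto. apply iter_pos; auto.
Qed.

Lemma normalized_iter_bounds k i : (i < N)%nat ->
  lower_seq k * p k i <= T (p k) i <= upper_seq k * p k i.
Proof.
  intros Hi. destruct (normalized_iter_scaled k) as [a [Ha E]].
  rewrite (Tmax_ext _ _ _ _ (fun j => a * z k j)), Tmax_scal, E by (auto; lra).
  assert (H1 := cw_lower_spec N K W HN (z k) i (iter_pos k) Hi).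
  assert (H2 := cw_upper_spec N K W HN (z k) i (iter_pos k) Hi).
  unfold lower_seq, upper_seq. split; nra.
Qed.

Lemma normalized_iter_unit k : enorm N (p (S k)) = 1.
Proof.
  simpl. set (y := T (p k)).
  assert (Hy : 0 < enorm N y) by (apply enorm_pos; auto; eapply Tmax_pos; eauto using normalized_iter_pos).
  rewrite (functional_extensionality (fun i => y i / enorm N y) (fun i => / enorm N y * y i))
    by (intros; unfold Rdiv; ring).
  rewrite enorm_scal by (left; apply Rinv_0_lt_compat; auto). field; lra.
Qed.

Lemma enorm_Tmax_bounds k :
  lower_seq (S k) <= enorm N (T (p (S k))) <= upper_seq (S k).
Proof.
  apply (enorm_between N (p (S k))); auto using normalized_iter_unit.
  - split; [left; apply lower_seq_pos|apply lower_le_upper_seq].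
  - intros i Hi. split; [left; apply normalized_iter_pos; auto|apply normalized_iter_bounds; auto].
Qed.

Lemma normalized_iter_step k i : (i < N)%nat ->
  Rabs (p (S (S k)) i - p (S k) i) <= (upper_seq (S k) - lower_seq (S k)) / lower_seq 0.
Proof.
  intros Hi. change (p (S (S k)) i) with (T (p (S k)) i / enorm N (T (p (S k)))).
  apply normalized_step_bound.
  - split; [apply lower_seq_pos|apply lower_seq_incr; lia].
  - apply enorm_Tmax_bounds.
  - assert (H := normalized_iter_pos (S k) i Hi).
    split; [lra|apply (enorm_unit_coord_le N); auto using normalized_iter_unit; lra].
  - apply normalized_iter_bounds; auto.
Qed.

Lemma normalized_iter_cauchy i : (i < N)%nat -> Cauchy_crit (fun k => p (S k) i).
Proof.
  intros Hi. destruct Hprim as [Hn _].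
  assert (H0 := lower_seq_pos 0).
  assert (HcC : 0 < c / C) by (apply Rdiv_lt_0_compat; lra).
  assert (HcC1 : c / C <= 1) by (apply (Rmult_le_reg_r C); [lra|]; unfold Rdiv;
    rewrite Rmult_assoc, Rinv_l; lra).
  apply (geometric_cauchy _ (fun k => (upper_seq (S k) - lower_seq (S k)) / lower_seq 0)
    n (1 - c / C)); auto; try lra.
  - intros k. apply Rle_mult_inv_pos; auto. assert (H := lower_le_upper_seq (S k)); lra.
  - intros k. apply Rmult_le_compat_r; [left; apply Rinv_0_lt_compat; auto|].
    assert (H1 := lower_seq_incr (S k) (S (S k)) ltac:(lia)).
    assert (H2 := upper_seq_decr (S k) (S (S k)) ltac:(lia)). lra.
  - intros k. replace (S (n + k)) with (S k + n)%nat by lia. unfold Rdiv. rewrite <- Rmult_assoc.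
    apply Rmult_le_compat_r; [left; apply Rinv_0_lt_compat; auto|]. apply seq_gap_contraction.
  - replace 0 with ((lam - lam) / lower_seq 0) by (field; lra).
    apply (CV_mult _ (fun _ => / lower_seq 0)); [|apply Un_cv_const].
    apply (Un_cv_S (fun k => upper_seq k - lower_seq k)).
    apply CV_minus; [apply upper_seq_cv|apply lower_seq_cv].
  - intros k; apply normalized_iter_step; auto.
Qed.

Definition pstar (i : nat) : R :=
  match lt_dec i N with
  | left Hi => proj1_sig (R_complete _ (normalized_iter_cauchy i Hi))
  | right _ => 0
  end.

Lemma normalized_iter_S_cv i : (i < N)%nat -> Un_cv (fun k => p (S k) i) (pstar i).
Proof.
  intros Hi. unfold pstar. destruct (lt_dec i N) as [Hi'|]; [|lia].
  exact (proj2_sig (R_complete _ (normalized_iter_cauchy i Hi'))).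
Qed.

Lemma normalized_iter_cv i : (i < N)%nat -> Un_cv (fun k => p k i) (pstar i).
Proof. intros Hi. apply Un_cv_of_S, normalized_iter_S_cv; auto. Qed.

Lemma pstar_eigen i : (i < N)%nat -> T pstar i = lam * pstar i.
Proof.
  intros Hi.
  assert (H1 : Un_cv (fun t => T (p (S t)) i) (T pstar i))
    by (apply Un_cv_Tmax; intros; apply normalized_iter_S_cv; auto).
  assert (Hr : Un_cv (fun t => enorm N (T (p (S t)))) lam).
  { apply (Un_cv_squeeze _ (fun t => lower_seq (S t)) (fun t => upper_seq (S t)));
      [apply enorm_Tmax_bounds|apply Un_cv_S, lower_seq_cv|apply Un_cv_S, upper_seq_cv]. }
  assert (H2 := CV_mult _ _ _ _ Hr (Un_cv_S _ _ (normalized_iter_S_cv i Hi))).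
  apply (UL_sequence _ _ _ H1). eapply Un_cv_ext; [|exact H2]. intros t. cbv beta.
  change (p (S (S t)) i) with (T (p (S t)) i / enorm N (T (p (S t)))).
  assert (H := enorm_Tmax_bounds t). assert (H' := lower_seq_pos (S t)). field; lra.
Qed.

Lemma pstar_nonneg i : (i < N)%nat -> 0 <= pstar i.
Proof.
  intros Hi. apply (Un_cv_lim_ge _ _ 0 (normalized_iter_cv i Hi)).
  intros k; left; apply normalized_iter_pos; auto.
Qed.

Lemma pstar_sum_sq : sumN N (fun j => pstar j ^ 2) = 1.
Proof.
  assert (H : Un_cv (fun t => sumN N (fun j => p (S t) j ^ 2)) (sumN N (fun j => pstar j ^ 2))).
  { apply (Un_cv_sumN N (fun t j => p (S t) j ^ 2)). intros j Hj. simpl.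
    apply CV_mult; [|apply CV_mult; [|apply Un_cv_const]]; apply normalized_iter_S_cv; auto. }
  apply (UL_sequence _ _ _ H). eapply Un_cv_ext; [|apply Un_cv_const]. intros t. cbv beta.
  rewrite enorm_sq, normalized_iter_unit; ring.
Qed.

Lemma Tmax_iter_pstar m i : (i < N)%nat -> Tmax_iter N K W m pstar i = lam ^ m * pstar i.
Proof.
  revert i; induction m; intros i Hi; simpl; [ring|].
  rewrite (Tmax_ext _ _ _ _ (fun j => lam ^ m * pstar j)) by auto.
  rewrite Tmax_scal by (apply pow_le; left; apply lam_pos). rewrite pstar_eigen; auto. ring.
Qed.

(* [lam ^ n * pstar i = T^n pstar i >= c * sumN N pstar > 0] by primitivity. *)
Lemma pstar_pos : pos pstar.
Proof.
  intros i Hi.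
  assert (Hs : 0 < sumN N pstar).
  { destruct (sumN_neq0 N (fun j => pstar j ^ 2)) as [j [Hj Hnz]]; [rewrite pstar_sum_sq; lra|].
    assert (0 < pstar j) by (destruct (pstar_nonneg j Hj) as [|E]; [|rewrite <- E in Hnz; simpl in Hnz]; lra).
    eapply Rlt_le_trans; [eauto|]. apply (sumN_ge_term N pstar j); auto using pstar_nonneg. }
  assert (H1 := Tmax_iter_ge_sum N K W HK n c C Hbounds pstar i pstar_nonneg Hi).
  rewrite Tmax_iter_pstar in H1 by auto.
  assert (0 < lam ^ n) by (apply pow_lt, lam_pos).
  destruct (Rlt_le_dec 0 (pstar i)); auto. nra.
Qed.

Lemma ratio_min_cv : Un_cv (fun k => minN (N - 1) (fun i => p k i / T (p k) i)) (/ lam).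
Proof.
  assert (Hlam := lam_pos).
  apply (Un_cv_squeeze _ (fun k => / upper_seq k) (fun k => / lower_seq k)).
  - intros k. assert (Hm := lower_seq_pos k).
    assert (Hb : forall i, (i <= N - 1)%nat -> / upper_seq k <= p k i / T (p k) i <= / lower_seq k).
    { intros i Hi. apply ratio_inv_bounds; auto.
      - apply normalized_iter_pos; lia.
      - apply normalized_iter_bounds; lia. }
    split; [apply minN_ge; intros; apply Hb; auto|].
    eapply Rle_trans; [apply (minN_le _ _ 0%nat)|apply Hb]; lia.
  - apply Un_cv_inv; [apply upper_seq_cv|lra].
  - apply Un_cv_inv; [apply lower_seq_cv|lra].
Qed.

Lemma power_iteration_limit : exists (rho : R) (q : nat -> R), 0 < rho /\ pos q /\
  (forall i, (i < N)%nat -> T q i = rho * q i) /\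
  (forall i, (i < N)%nat -> Un_cv (fun k => p k i) (q i)) /\
  Un_cv (fun k => minN (N - 1) (fun i => p k i / T (p k) i)) (/ rho).
Proof.
  exists lam, pstar. repeat split; auto using lam_pos, pstar_pos, pstar_eigen,
    normalized_iter_cv, ratio_min_cv.
Qed.
End PowerIteration.

Lemma sumN_Cmod_le n (u v : nat -> R) :
  Cmod (sumN n u, sumN n v) <= sumN n (fun j => Cmod (u j, v j)).
Proof.
  induction n; cbn [sumN]; [change (Cmod 0%C <= 0); rewrite Cmod_0; lra|].
  eapply Rle_trans; [exact (Cmod_triangle (sumN n u, sumN n v) (u n, v n))|]. simpl; lra.
Qed.

Lemma eigenvector_modulus_le N (A : nat -> nat -> R) a b x y i :
  (forall j, (j < N)%nat -> 0 <= A i j) ->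
  sumN N (fun j => A i j * x j) = a * x i - b * y i ->
  sumN N (fun j => A i j * y j) = a * y i + b * x i ->
  Cmod (a, b) * Cmod (x i, y i) <= sumN N (fun j => A i j * Cmod (x j, y j)).
Proof.
  intros HA E1 E2. rewrite <- Cmod_mult. unfold Cmult; simpl fst; simpl snd.
  rewrite <- E1, <- E2. eapply Rle_trans; [apply sumN_Cmod_le|].
  right. apply sumN_ext. intros j Hj. specialize (HA j Hj).
  rewrite <- (Rabs_pos_eq (A i j)) at 3 by auto. rewrite <- Cmod_R, <- Cmod_mult.
  unfold Cmult; simpl fst; simpl snd. f_equal; f_equal; ring.
Qed.

Lemma eigenvalue_modulus_le N (A : nat -> nat -> R) (p : nat -> R) lam a b :
  (forall i j, (i < N)%nat -> (j < N)%nat -> 0 <= A i j) -> positive_vec N p ->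
  (forall i, (i < N)%nat -> sumN N (fun j => A i j * p j) <= lam * p i) ->
  is_eigenvalue N A a b -> Cmod (a, b) <= lam.
Proof.
  intros HA Hp Hsub [x [y [[i1 [Hi1 Hnz]] Heig]]].
  set (w j := Cmod (x j, y j)).
  set (cs := maxN (N - 1) (fun j => w j / p j)).
  destruct (argmaxN_spec (N - 1) (fun j => w j / p j)) as [Hi0 Ei0].
  set (i0 := argmaxN (N - 1) (fun j => w j / p j)) in *. fold cs in Ei0.
  assert (Hi0N : (i0 < N)%nat) by lia.
  assert (Hle : forall j, (j < N)%nat -> w j <= cs * p j).
  { intros j Hj. assert (H := maxN_ge (N - 1) (fun j => w j / p j) j ltac:(lia)). fold cs in H.
    specialize (Hp j Hj). apply (Rmult_le_compat_r (p j)) in H; [|lra].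
    field_simplify in H; lra. }
  assert (Hw1 : 0 < w i1).
  { apply Cmod_gt_0. intros E. injection E; intros; destruct Hnz; auto. }
  assert (Hcs : 0 < cs) by (specialize (Hle i1 Hi1); specialize (Hp i1 Hi1); nra).
  assert (Ew : w i0 = cs * p i0) by (rewrite Ei0; specialize (Hp i0 Hi0N); field; lra).
  assert (Hmod : Cmod (a, b) * w i0 <= sumN N (fun j => A i0 j * w j))
    by (destruct (Heig i0 Hi0N); apply eigenvector_modulus_le; auto).
  assert (H2 : sumN N (fun j => A i0 j * w j) <= cs * sumN N (fun j => A i0 j * p j)).
  { rewrite <- sumN_scal. apply sumN_le. intros j Hj.
    specialize (HA i0 j Hi0N Hj). specialize (Hle j Hj). nra. }
  specialize (Hsub i0 Hi0N). specialize (Hp i0 Hi0N).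
  rewrite Ew in Hmod. assert (0 < cs * p i0) by nra. nra.
Qed.

Lemma max_spectral_radius_of_eigenvector N K W lam p : (1 <= N)%nat ->
  (forall i, (i < N)%nat -> (1 <= K i)%nat) ->
  (forall i k j, (i < N)%nat -> (k < K i)%nat -> (j < N)%nat -> 0 <= W i k j) ->
  0 <= lam -> positive_vec N p -> (forall i, (i < N)%nat -> Tmax N K W p i = lam * p i) ->
  (exists s, is_sel N K s /\ is_spectral_radius N (selmat W s) lam) /\
  (forall s r, is_sel N K s -> is_spectral_radius N (selmat W s) r -> r <= lam).
Proof.
  intros HN HK HW Hlam Hp Heig.
  assert (Hbound : forall s a b, is_sel N K s -> is_eigenvalue N (selmat W s) a b ->
    sqrt (a ^ 2 + b ^ 2) <= lam).
  { intros s a b Hs. apply (eigenvalue_modulus_le N _ p); auto.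
    - intros i j Hi Hj. apply HW; auto.
    - intros i Hi. rewrite <- Heig by auto. apply Tmax_ge_sel; auto. }
  split.
  - set (s := maximizing_sel N K W p). assert (Hs : is_sel N K s) by apply maximizing_sel_is_sel, HK.
    exists s. repeat split; auto; [|intros; eapply Hbound; eauto].
    exists lam, 0. split.
    + exists p, (fun _ => 0). split.
      * exists 0%nat. split; [lia|left; specialize (Hp 0%nat ltac:(lia)); lra].
      * intros i Hi. split.
        -- change (sumN N (fun j => selmat W s i j * p j) = lam * p i - 0 * 0).
           unfold s; rewrite <- Tmax_maximizing_sel, Heig; auto; ring.
        -- rewrite (sumN_ext N _ (fun _ => 0 * 0)) by (intros; ring). rewrite sumN_scal; ring.
    + replace (lam ^ 2 + 0 ^ 2) with (lam ^ 2) by ring. rewrite sqrt_pow2; auto.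
  - intros s r Hs [[a [b [He ->]]] _]. eapply Hbound; eauto.
Qed.

Lemma ratio_lower_bound a amin D sigma t alpha : 0 < amin <= a -> 0 <= D <= a * t ->
  0 < sigma -> 0 < t -> 0 < alpha ->
  / t - sigma / (alpha * amin * t ^ 2) <= a * alpha / (alpha * D + sigma).
Proof.
  intros Ha HD Hs Ht Hal.
  assert (H1 : a * alpha / (alpha * (a * t) + sigma) <= a * alpha / (alpha * D + sigma)).
  { apply Rmult_le_compat_l; [nra|]. apply Rinv_le_contravar; nra. }
  assert (H2 : / t - a * alpha / (alpha * (a * t) + sigma) = sigma / (t * (alpha * (a * t) + sigma)))
    by (field; nra).
  assert (H3 : sigma / (t * (alpha * (a * t) + sigma)) <= sigma / (alpha * amin * t ^ 2)).
  { apply Rmult_le_compat_l; [lra|]. replace (t ^ 2) with (t * t) by ring.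
    assert (Hp : 0 < alpha * amin * (t * t)) by (repeat apply Rmult_lt_0_compat; lra).
    assert (alpha * amin * (t * t) <= alpha * a * (t * t))
      by (apply Rmult_le_compat_r; [nra|apply Rmult_le_compat_l; lra]).
    apply Rinv_le_contravar; nra. }
  lra.
Qed.

Lemma ratio_at_equality a D sigma t alpha : 0 < a -> D = a * t ->
  0 < sigma -> 0 < t -> 0 < alpha -> a * alpha / (alpha * D + sigma) <= / t.
Proof.
  intros Ha -> Hs Ht Hal.
  apply Rle_trans with (a * alpha / (alpha * (a * t))); [|right; field; lra].
  apply Rmult_le_compat_l; [nra|].
  apply Rinv_le_contravar; [repeat apply Rmult_lt_0_compat|]; lra.
Qed.

Lemma Rdiv_lt_of_gt_div s e d x : 0 < s -> 0 < e -> 0 < d -> x > s / (e * d) -> s / (x * d) < e.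
Proof.
  intros Hs He Hd Hx.
  assert (Hx0 : 0 < x) by (assert (0 < s / (e * d)) by (apply Rdiv_lt_0_compat; nra); lra).
  assert (H : s < x * (e * d)).
  { replace s with (s / (e * d) * (e * d)) at 1 by (field; nra). apply Rmult_lt_compat_r; nra. }
  apply (Rmult_lt_reg_r (x * d)); [nra|].
  replace (s / (x * d) * (x * d)) with s by (field; nra). nra.
Qed.

(* Each ratio tends to [a k / D k >= 1/t] (or to infinity), and one of them tends to exactly
   [1/t]. *)
Lemma lim_infty_min_ratio n (a D : nat -> R) sigma t :
  0 < sigma -> 0 < t ->
  (forall k, (k <= n)%nat -> 0 < a k /\ 0 <= D k <= a k * t) ->
  (exists k, (k <= n)%nat /\ D k = a k * t) ->
  lim_infty (fun alpha => minN n (fun k => a k * alpha / (alpha * D k + sigma))) (/ t).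
Proof.
  intros Hs Ht HaD [k0 [Hk0 Ek0]] eps Heps.
  set (amin := minN n a).
  assert (Hamin : 0 < amin) by (apply minN_pos; intros; apply HaD; auto).
  assert (Hd : 0 < amin * t ^ 2) by (apply Rmult_lt_0_compat; [|apply pow_lt]; lra).
  exists (sigma / (eps * (amin * t ^ 2))). intros alpha Halpha.
  assert (Hal : 0 < alpha) by (assert (0 < sigma / (eps * (amin * t ^ 2))) by
    (apply Rdiv_lt_0_compat; nra); lra).
  assert (Hsmall : sigma / (alpha * amin * t ^ 2) < eps).
  { rewrite Rmult_assoc. apply Rdiv_lt_of_gt_div; auto. }
  assert (Hlow : / t - sigma / (alpha * amin * t ^ 2)
    <= minN n (fun k => a k * alpha / (alpha * D k + sigma))).
  { apply minN_ge. intros k Hk. destruct (HaD k Hk) as [Hak HDk].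
    apply ratio_lower_bound; auto. split; auto. apply minN_le; auto. }
  assert (Hhigh : minN n (fun k => a k * alpha / (alpha * D k + sigma)) <= / t).
  { eapply Rle_trans; [apply (minN_le _ _ k0 Hk0)|].
    apply ratio_at_equality; auto. apply HaD; auto. }
  apply Rabs_def1; lra.
Qed.

Lemma lim_infty_ext f h l : (forall alpha, f alpha = h alpha) -> lim_infty h l -> lim_infty f l.
Proof.
  intros E H eps Heps. destruct (H eps Heps) as [M HM]. exists M. intros; rewrite E; auto.
Qed.

(* Entry [j] of the row [e_i^T - a_i^k(mu)]; a matrix of [Z(mu)] picks one such row for each [i]. *)
Definition zrow (mu : nat -> R) (g : nat -> nat -> nat -> R) (i k j : nat) : R :=
  delta i j - a_row mu g i k j.

Lemma piter_normalized_iter N K mu g p0 k :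
  piter N K mu g p0 k = normalized_iter N K (zrow mu g) p0 k.
Proof. induction k; simpl; [|rewrite IHk]; reflexivity. Qed.

Section Multicast.
Variables (N : nat) (K : nat -> nat) (g : nat -> nat -> nat -> R) (sigma2 : R) (mu : nat -> R).
Hypothesis Hg : forall i k j, (i < N)%nat -> (k < K i)%nat -> (j < N)%nat -> 0 <= g i k j.
Hypothesis Hgii : forall i k, (i < N)%nat -> (k < K i)%nat -> 0 < g i k i.
Hypothesis Hmu : forall i, (i < N)%nat -> 0 < mu i.

Definition interference (q : nat -> R) (i k : nat) : R :=
  sumN N (fun j => if Nat.eqb j i then 0 else g i k j * q j).

Lemma zrow_nonneg i k j : (i < N)%nat -> (k < K i)%nat -> (j < N)%nat -> 0 <= zrow mu g i k j.
Proof.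
  intros Hi Hk Hj. specialize (Hgii i k Hi Hk). specialize (Hmu i Hi). specialize (Hg i k j Hi Hk Hj).
  unfold zrow, delta, a_row. destruct (Nat.eqb_spec j i), (Nat.eqb_spec i j); try lia; [lra|].
  assert (0 <= mu i * g i k j / g i k i) by (apply Rle_mult_inv_pos; nra). lra.
Qed.

Lemma zrow_sum q i k : (i < N)%nat -> (k < K i)%nat ->
  sumN N (fun j => zrow mu g i k j * q j) = mu i / g i k i * interference q i k.
Proof.
  intros Hi Hk. specialize (Hgii i k Hi Hk). unfold interference. rewrite <- sumN_scal.
  apply sumN_ext. intros j Hj. unfold zrow, delta, a_row.
  destruct (Nat.eqb_spec j i), (Nat.eqb_spec i j); try lia; field; lra.
Qed.

Lemma sinr_k_scaled q alpha i k :
  sinr_k N g sigma2 (fun j => alpha * q j) i k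
  = g i k i * q i * alpha / (alpha * interference q i k + sigma2).
Proof.
  unfold sinr_k, interference. rewrite <- sumN_scal.
  rewrite (sumN_ext N (fun j => if Nat.eqb j i then 0 else g i k j * (alpha * q j))
    (fun j => alpha * (if Nat.eqb j i then 0 else g i k j * q j)))
    by (intros; destruct Nat.eqb; ring).
  f_equal; ring.
Qed.

Lemma sinr_scaling_limit lam q i :
  (forall i, (i < N)%nat -> (1 <= K i)%nat) -> 0 < sigma2 -> 0 < lam -> positive_vec N q ->
  Tmax N K (zrow mu g) q i = lam * q i -> (i < N)%nat ->
  lim_infty (fun alpha => sinr N K g sigma2 (fun j => alpha * q j) i) (/ lam * mu i).
Proof.
  intros HK Hs Hlam Hq Heig Hi.
  assert (HKi := HK i Hi). assert (Hmui := Hmu i Hi). assert (Hqi := Hq i Hi).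
  eapply lim_infty_ext.
  { intros alpha. unfold sinr. apply minN_ext. intros k _. apply sinr_k_scaled. }
  replace (/ lam * mu i) with (/ (lam / mu i)) by (field; lra).
  assert (Hbound : forall k, (k < K i)%nat ->
    mu i / g i k i * interference q i k <= lam * q i).
  { intros k Hk. rewrite <- Heig, <- zrow_sum by auto.
    apply (maxN_ge _ (fun k => sumN N (fun j => zrow mu g i k j * q j))). lia. }
  apply lim_infty_min_ratio; auto.
  - apply Rdiv_lt_0_compat; auto.
  - intros k Hk. assert (Hk' : (k < K i)%nat) by lia. assert (Hgk := Hgii i k Hi Hk').
    split; [apply Rmult_lt_0_compat; auto|split].
    + apply sumN_nonneg. intros j Hj. destruct Nat.eqb; [lra|].
      apply Rmult_le_pos; [apply Hg|left; apply Hq]; auto.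
    + apply (Rmult_le_reg_l (mu i / g i k i)); [apply Rdiv_lt_0_compat; auto|].
      replace (mu i / g i k i * (g i k i * q i * (lam / mu i))) with (lam * q i) by (field; lra).
      apply Hbound; auto.
  - set (ks := maximizing_sel N K (zrow mu g) q i).
    assert (Hks : (ks < K i)%nat) by exact (maximizing_sel_is_sel N K (zrow mu g) HK q i Hi).
    exists ks. split; [lia|]. assert (Hgk := Hgii i ks Hi Hks).
    assert (E : mu i / g i ks i * interference q i ks = lam * q i)
      by (rewrite <- Heig, Tmax_maximizing_sel, <- zrow_sum; auto).
    apply (Rmult_eq_reg_l (mu i / g i ks i)); [|apply Rgt_not_eq, Rdiv_lt_0_compat; auto].
    rewrite E. field. lra.
Qed.
End Multicast.

Theorem theorem3 (N : nat) (K : nat -> nat) (g : nat -> nat -> nat -> R)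
  (sigma2 : R) (mu : nat -> R) (p0 : nat -> R)
  (HN : (1 <= N)%nat)
  (HK : forall i, (i < N)%nat -> (1 <= K i)%nat)
  (Hg : forall i k j, (i < N)%nat -> (k < K i)%nat -> (j < N)%nat -> 0 <= g i k j)
  (Hgii : forall i k, (i < N)%nat -> (k < K i)%nat -> 0 < g i k i)
  (Hsigma : 0 < sigma2)
  (Hmu : forall i, (i < N)%nat -> 0 < mu i)
  (Hirr : forall s, is_sel N K s -> irreducible N (Zmat mu g s))
  (Hprim : primitive_set N K mu g)
  (Hp0 : forall i, (i < N)%nat -> 0 < p0 i) :
  exists rho : R,
    is_max_spectral_radius N K mu g rho /\
    Un_cv (beta_iter N K mu g p0) (/ rho) /\
    exists pstar : nat -> R,
      (forall i, (i < N)%nat -> Un_cv (fun k => piter N K mu g p0 k i) (pstar i)) /\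
      (forall i, (i < N)%nat ->
         lim_infty (fun alpha => sinr N K g sigma2 (fun j => alpha * pstar j) i)
                   (/ rho * mu i)).
Proof.
  assert (HW := zrow_nonneg N K g mu Hg Hgii Hmu).
  destruct Hprim as [n Hn].
  destruct (primitive_selprod_bounds N K (zrow mu g) HK HW HN n Hn) as [c [C [Hc Hbounds]]].
  destruct (power_iteration_limit N K (zrow mu g) n p0 c C HN HK HW Hn Hp0 Hc Hbounds)
    as [rho [q [Hrho [Hq [Heig [Hcv Hbeta]]]]]].
  exists rho. split; [|split].
  - exact (max_spectral_radius_of_eigenvector N K (zrow mu g) rho q HN HK HW
      ltac:(lra) Hq Heig).
  - eapply Un_cv_ext; [|exact Hbeta]. intros k.
    unfold beta_iter. rewrite piter_normalized_iter. reflexivity.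
  - exists q. split.
    + intros i Hi. eapply Un_cv_ext; [|exact (Hcv i Hi)].
      intros k. rewrite piter_normalized_iter. reflexivity.
    + intros i Hi. apply sinr_scaling_limit; auto.
Qed.
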